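(* Let $G$ be a connected graph with $n\ge 2$ vertices. If the maximum degree satisfies $\Delta(G)<n/2$, then $\frac{q(G)}{R(G)}<\frac{n}{\sqrt{n-1}}$.
   Context: All graphs are finite and simple; $\Delta(G)$ is the maximum degree. For a vertex $u$, $d(u)$ is its degree. The Randić index is $R(G)=\sum_{\{u,v\}\in E(G)} \frac{1}{\sqrt{d(u)d(v)}}$. The signless Laplacian is $Q=D+A$ ($D$ the diagonal degree matrix, $A$ the adjacency matrix), and $q(G)$ is its largest eigenvalue. *)

From HB Require Import structures.
From mathcomp Require Import all_boot all_order all_algebra.
Set Implicit Arguments. Unset Strict Implicit. Unset Printing Implicit Defensive.
Import Order.TTheory GRing.Theory Num.Theory.

Definition simple_graph (n : nat) (e : rel 'I_n) : Prop :=
  symmetric e /\ irreflexive e.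

Definition connected_graph (n : nat) (e : rel 'I_n) : Prop :=
  forall x y : 'I_n, connect e x y.

Definition deg (n : nat) (e : rel 'I_n) (u : 'I_n) : nat := #|[set v | e u v]|.

Definition maxdeg (n : nat) (e : rel 'I_n) : nat := \max_(u : 'I_n) deg e u.

Local Open Scope ring_scope.

Definition randic (R : rcfType) (n : nat) (e : rel 'I_n) : R :=
  \sum_(u : 'I_n) \sum_(v : 'I_n | e u v && (u < v)%N)
     (Num.sqrt ((deg e u)%:R * (deg e v)%:R))^-1.

Definition adjmx (R : rcfType) (n : nat) (e : rel 'I_n) : 'M[R]_n :=
  \matrix_(i, j) (e i j)%:R.

Definition degmx (R : rcfType) (n : nat) (e : rel 'I_n) : 'M[R]_n :=
  diag_mx (\row_i (deg e i)%:R).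

Definition signless_laplacian (R : rcfType) (n : nat) (e : rel 'I_n) : 'M[R]_n :=
  degmx R e + adjmx R e.

Definition largest_eigenvalue (R : rcfType) (n : nat) (A : 'M[R]_n) (q : R) : Prop :=
  eigenvalue A q /\ (forall a : R, eigenvalue A a -> a <= q).

From HB Require Import structures.
From mathcomp Require Import all_boot all_order all_algebra.
From mathcomp Require Import ring lra.
Import Order.TTheory GRing.Theory Num.Theory.
Local Open Scope ring_scope.

(* Every eigenvalue of Q = D + A is at most its largest column sum
   2 Delta < n (look at an eigenvector entry of maximal modulus), while the
   Randic index of a graph without isolated vertices is at least sqrt(n - 1):
   writing
   n = sum_u sum_{v ~ u} 1/d(u) = sum_{uv in E} (1/d(u) + 1/d(v)), it suffices
   that 1/sqrt(ab) >= sqrt(n-1)/n (1/a + 1/b) for all 1 <= a, b <= n - 1. *)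

Section Degrees.

Variables (n : nat) (e : rel 'I_n).

Lemma deg_gt0 (u : 'I_n) : (2 <= n)%N -> connected_graph e -> (0 < deg e u)%N.
Proof.
move=> n_ge2 conn.
have [w w_neq_u] : exists w : 'I_n, w != u.
  have [->|u_neq] := eqVneq u (Ordinal n_ge2).
    by exists (Ordinal (ltnW n_ge2)).
  by exists (Ordinal n_ge2); rewrite eq_sym.
have /connectP [[|v p] /= path_p last_p] := conn u w.
  by rewrite last_p eqxx in w_neq_u.
case/andP: path_p => euv _.
by apply/card_gt0P; exists v; rewrite inE.
Qed.

Lemma deg_le_pred (u : 'I_n) : irreflexive e -> (deg e u <= n.-1)%N.
Proof.
move=> irr; rewrite -[n in n.-1]card_ord -(cardsC1 u).
apply/subset_leq_card/subsetP => v; rewrite !inE.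
by apply: contraTneq => ->; rewrite irr.
Qed.

Lemma sum_adj_deg (R : nzSemiRingType) (i : 'I_n) : symmetric e ->
  \sum_(k < n) (e k i)%:R = (deg e i)%:R :> R.
Proof.
move=> sym; rewrite /deg -sum1dep_card natr_sum [RHS]big_mkcond.
by apply: eq_bigr => k _; rewrite sym; case: (e i k).
Qed.

Lemma sum_edges_sym (R : nmodType) (f : 'I_n -> R) :
  simple_graph e ->
  \sum_u \sum_(v | e u v && (u < v)%N) (f u + f v) =
  \sum_u \sum_(v | e u v) f u.
Proof.
case=> sym irr.
have swap : \sum_u \sum_(v | e u v && (u < v)%N) f v =
            \sum_u \sum_(v | e u v && (v < u)%N) f u.
  under eq_bigr do rewrite big_mkcond.
  rewrite exchange_big /=; apply: eq_bigr => u _.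
  by rewrite [RHS]big_mkcond; apply: eq_bigr => v _; rewrite sym.
under eq_bigr do rewrite big_split /=.
rewrite big_split /= swap -big_split /=; apply: eq_bigr => u _.
rewrite [RHS](bigID (fun v : 'I_n => (u < v)%N)) /=; congr (_ + _).
apply: eq_bigl => v; case euv: (e u v) => //=.
rewrite -leqNgt ltn_neqAle; case: eqP => [/val_inj vu|] //=.
by rewrite vu irr in euv.
Qed.

Lemma sum_adj_inv_deg (R : numFieldType) : (forall u, 0 < deg e u)%N ->
  \sum_u \sum_(v | e u v) ((deg e u)%:R^-1 : R) = n%:R.
Proof.
move=> no_isolated; rewrite -[n in RHS]card_ord -sumr_const.
apply: eq_bigr => u _; rewrite sumr_const.
have -> : #|[pred v | e u v]| = deg e u by apply: eq_card => v; rewrite inE.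
by rewrite -[_ *+ _]mulr_natr mulVf // pnatr_eq0 -lt0n.
Qed.

End Degrees.

Lemma eigenvalue_norm_le_col_sum (R : realFieldType) (n : nat)
    (A : 'M[R]_n) (c a : R) :
  (forall j, \sum_i `|A i j| <= c) -> eigenvalue A a -> `|a| <= c.
Proof.
move=> col_sum /eigenvalueP [v vA v_neq0].
have [j vj_neq0] : exists j, v 0 j != 0.
  apply/existsP; apply: contraNT v_neq0; rewrite negb_exists => /forallP v0.
  by apply/eqP/rowP => j; rewrite mxE; apply/eqP/negbNE.
have [i _ vi_max] := @arg_maxP _ _ _ j predT (fun k => `|v 0 k|) isT.
have vi_gt0 : 0 < `|v 0 i| by apply: lt_le_trans (vi_max j isT); rewrite normr_gt0.
rewrite -(ler_pM2r vi_gt0) -normrM.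
have -> : a * v 0 i = \sum_k v 0 k * A k i.
  by have := congr1 (fun M : 'rV_n => M 0 i) vA; rewrite !mxE.
apply: le_trans (ler_norm_sum _ _ _) _.
rewrite [leRHS]mulrC; apply: le_trans _ (ler_wpM2l (ltW vi_gt0) (col_sum i)).
rewrite mulr_sumr; apply: ler_sum => k _.
by rewrite normrM; apply: ler_wpM2r => //; exact: vi_max.
Qed.

Lemma signless_laplacian_eigenvalue_le (R : rcfType) (n : nat) (e : rel 'I_n)
    (q : R) :
  simple_graph e -> eigenvalue (signless_laplacian R e) q ->
  q <= (2 * maxdeg e)%:R.
Proof.
move=> [sym _] /eigenvalue_norm_le_col_sum q_le; apply: le_trans (ler_norm q) _.
apply: q_le => j.
rewrite (eq_bigr (fun i => (deg e i)%:R *+ (i == j) + (e i j)%:R)) => [|i _]; last first.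
  by rewrite !mxE ger0_norm // addr_ge0 ?mulrn_wge0.
rewrite big_split /= sum_adj_deg // (bigD1 j) //= eqxx mulr1n big1 ?addr0.
  by rewrite -natrD addnn -mul2n ler_nat leq_mul2l leq_bigmax.
by move=> k /negbTE ->.
Qed.

Lemma inv_sqrt_mul_ge (R : rcfType) (c a b : R) :
  1 <= a <= c -> 1 <= b <= c ->
  Num.sqrt c / (c + 1) * (a^-1 + b^-1) <= (Num.sqrt (a * b))^-1.
Proof.
move=> /andP [a_ge1 a_le] /andP [b_ge1 b_le].
have ab_gt0 : 0 < a * b by nra.
set s := Num.sqrt (a * b).
have s_gt0 : 0 < s by rewrite sqrtr_gt0.
have ss : s ^+ 2 = a * b by rewrite sqr_sqrtr // ltW.
have key : Num.sqrt c * (a + b) <= (c + 1) * s.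
  rewrite -ler_sqr ?nnegrE ?mulr_ge0 ?sqrtr_ge0 ?(ltW s_gt0) //; try lra.
  (* c (a + b)^2 <= (c + 1)^2 a b is (c a - b) (c b - a) >= 0. *)
  rewrite !exprMn ss sqr_sqrtr; last lra.
  have ca_ge : 0 <= c * a - b by nra.
  have cb_ge : 0 <= c * b - a by nra.
  have := mulr_ge0 ca_ge cb_ge; nra.
have -> : Num.sqrt c / (c + 1) * (a^-1 + b^-1)
          = Num.sqrt c * (a + b) / ((c + 1) * s ^+ 2).
  by rewrite ss; field; apply/and3P; split; apply/eqP; lra.
have -> : s^-1 = (c + 1) * s / ((c + 1) * s ^+ 2).
  by field; apply/andP; split; apply/eqP; lra.
by rewrite ler_wpM2r // invr_ge0; nra.
Qed.

Lemma randic_ge_sqrt (R : rcfType) (n : nat) (e : rel 'I_n) :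
  (2 <= n)%N -> simple_graph e -> connected_graph e ->
  Num.sqrt (n - 1)%:R <= randic R e.
Proof.
move=> n_ge2 sg conn; have [_ irr] := sg.
have n_gt0 : (0 < n)%N by apply: ltnW.
have n_eq : n%:R = (n - 1)%:R + 1 :> R by rewrite natr1 subn1 prednK.
pose k : R := Num.sqrt (n - 1)%:R / n%:R.
have -> : Num.sqrt (n - 1)%:R = k * n%:R by rewrite mulfVK ?pnatr_eq0 -?lt0n.
rewrite -(@sum_adj_inv_deg n e R (fun u => @deg_gt0 n e u n_ge2 conn)).
rewrite -sum_edges_sym // mulr_sumr; apply: ler_sum => u _.
rewrite mulr_sumr; apply: ler_sum => v _; rewrite /k n_eq.
have deg_bounds w : 1 <= ((deg e w)%:R : R) <= (n - 1)%:R.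
  by rewrite ler1n deg_gt0 //= ler_nat subn1 deg_le_pred.
exact: inv_sqrt_mul_ge (deg_bounds u) (deg_bounds v).
Qed.

Theorem lemma3p4 (R : rcfType) (n : nat) (e : rel 'I_n) (q : R) :
  (2 <= n)%N ->
  simple_graph e ->
  connected_graph e ->
  (maxdeg e * 2 < n)%N ->
  largest_eigenvalue (signless_laplacian R e) q ->
  q / randic R e < n%:R / Num.sqrt (n - 1)%:R.
Proof.
move=> n_ge2 sg conn maxdeg_lt [eig _].
have q_lt_n : q < n%:R.
  apply: le_lt_trans (signless_laplacian_eigenvalue_le _ _ _ _ sg eig) _.
  by rewrite ltr_nat mulnC.
have randic_ge := randic_ge_sqrt R _ _ n_ge2 sg conn.
have sqrt_gt0 : 0 < Num.sqrt (n - 1)%:R :> R by rewrite sqrtr_gt0 ltr0n subn_gt0.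
have randic_gt0 : 0 < randic R e by apply: lt_le_trans randic_ge.
rewrite ltr_pdivrMr // mulrAC ltr_pdivlMr //.
have := ler0n R n; nra.
Qed.
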